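(* Let $\mathsf{CS}$ be a constant specification for $\mathsf{LPC}^+$. The canonical relational model $\mathcal M=(W,W_N,R_{Fm},R_{Tm},V)$ for $\mathsf{LPC}^+_{\mathsf{CS}}$ is an $\mathsf{LPC}^+_{\mathsf{CS}}$-model.
   Context: Language: countable sets $\mathsf{Const}$, $\mathsf{Var}$, $\mathsf{Prop}$; terms $t ::= c \mid x \mid t\cdot t \mid t+t \mid\ !t$; formulas $\phi ::= p \mid \neg\phi \mid \phi\wedge\phi \mid \phi\supset\phi \mid \phi>\phi \mid t{:}\phi$; $\mathsf{Tm},\mathsf{Fm}$ the sets of terms and formulas; $\bot:=\chi\wedge\neg\chi$ for a fixed $\chi$. Axiom schemes of $\mathsf{LPC}^+$: (A1) all instances of classical tautologies; (A2) $(\phi>(\psi\supset\chi))\supset((\phi>\psi)\supset(\phi>\chi))$; (A3) $\phi>\phi$; (A4) $(\phi>\psi)\supset(\phi\supset\psi)$; (A5) $(s{:}(\phi>\psi)\wedge t{:}\phi) > (s\cdot t){:}\psi$; (A6) $s{:}\phi > (s+t){:}\phi$; (A7) $t{:}\phi>(s+t){:}\phi$; (A8) $t{:}\phi>\phi$; (A9) $t{:}\phi > (!t){:}t{:}\phi$. A constant specification $\mathsf{CS}$ is a set of $c{:}\phi$ with $c\in\mathsf{Const}$, $\phi$ an instance of (A1)–(A9). $\mathsf{LPC}^+_{\mathsf{CS}}$: axioms (A1)–(A9) and $\mathsf{CS}$; rules (MP) and (RCN): from $\psi$ infer $\phi>\psi$. $T\vdash\phi$ iff $\vdash(\psi_1\wedge\cdots\wedge\psi_n)\supset\phi$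 for some $\psi_i\in T$; $T$ consistent iff $T\nvdash\bot$; maximal consistent sets as usual. Relational models $(W,W_N,R_{Fm},R_{Tm},V)$: $W_N\subseteq W$ nonempty; $R_\phi\subseteq W_N\times W_N$ for each formula; $R_t\subseteq W\times W$ for each term; $V(w)\subseteq\mathsf{Prop}$ for $w\in W_N$, $V(w)\subseteq\mathsf{Fm}$ for $w\in W\setminus W_N$. Truth: at non-normal $w$, $w\models\phi$ iff $\phi\in V(w)$; at normal $w$: $p$ iff $p\in V(w)$, $\neg,\wedge,\supset$ classical, $\phi>\psi$ iff $R_\phi(w)\subseteq[\psi]$, $t{:}\phi$ iff $R_t(w)\subseteq[\phi]$, with $[\phi]=\{w\in W: w\models\phi\}$. An $\mathsf{LPC}^+_{\mathsf{CS}}$-model is a relational model such that for all $w\in W_N$: (1) $R_\phi(w)\subseteq[\phi]$ for all $\phi$; (2) if $w\in[\phi]$ then $w\in R_\phi(w)$; (3) $R_c(w)\subseteq[\phi]$ for each $c{:}\phi\in\mathsf{CS}$; (4) $R_{s+t}(w)\subseteq R_s(w)\cap R_t(w)$; (5) for all $v\in R_{s\cdot t}(w)$ and all $\phi,\psi$: if $w\in[s{:}(\phi>\psi)\wedge t{:}\phi]$ then $v\in[\psi]$; (6) $wR_tw$ for all $t$; (7) for all $t$ and $v,u\in W$, if $wR_{!t}v$ and $vR_tu$ then $wR_tu$. The canonical relational model for $\mathsf{LPC}^+_{\mathsf{CS}}$: $W$ is the set of all subsets of $\mathsf{Fm}$; $W_N$ is the set of maximal $\mathsf{LPC}^+_{\mathsf{CS}}$-consistent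 sets; for $\Gamma,\Delta\in W_N$, $\Gamma R_\phi\Delta$ iff $\Gamma/\phi\subseteq\Delta$ where $\Gamma/\phi=\{\psi:\phi>\psi\in\Gamma\}$; for $\Gamma,\Delta\in W$, $\Gamma R_t\Delta$ iff $\Gamma/t\subseteq\Delta$ where $\Gamma/t=\{\psi: t{:}\psi\in\Gamma\}$; $V(\Gamma)=\Gamma$ for $\Gamma\in W\setminus W_N$ and $V(\Gamma)=\mathsf{Prop}\cap\Gamma$ for $\Gamma\in W_N$. *)

From Stdlib Require Import List.
Import ListNotations.

(* Const, Var, Prop : countable sets, each represented by nat. *)
Inductive Tm : Type :=
  | TConst : nat -> Tm
  | TVar : nat -> Tm
  | TApp : Tm -> Tm -> Tm
  | TSum : Tm -> Tm -> Tm
  | TBang : Tm -> Tm.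

Inductive Fm : Type :=
  | Atom : nat -> Fm
  | Neg : Fm -> Fm
  | And : Fm -> Fm -> Fm
  | Imp : Fm -> Fm -> Fm
  | Cond : Fm -> Fm -> Fm
  | Just : Tm -> Fm -> Fm.

Definition chi : Fm := Atom 0.
Definition Bot : Fm := And chi (Neg chi).

Inductive PF : Type :=
  | PVar : nat -> PF
  | PNeg : PF -> PF
  | PAnd : PF -> PF -> PF
  | PImp : PF -> PF -> PF.

Fixpoint peval (v : nat -> bool) (f : PF) : bool :=
  match f with
  | PVar n => v n
  | PNeg a => negb (peval v a)
  | PAnd a b => andb (peval v a) (peval v b)
  | PImp a b => orb (negb (peval v a)) (peval v b)
  end.

Definition tautology (f : PF) : Prop := forall v, peval v f = true.

Fixpoint psubst (s : nat -> Fm) (f : PF) : Fm :=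
  match f with
  | PVar n => s n
  | PNeg a => Neg (psubst s a)
  | PAnd a b => And (psubst s a) (psubst s b)
  | PImp a b => Imp (psubst s a) (psubst s b)
  end.

Inductive IsAx : Fm -> Prop :=
  | A1 : forall f s, tautology f -> IsAx (psubst s f)
  | A2 : forall p q r,
      IsAx (Imp (Cond p (Imp q r)) (Imp (Cond p q) (Cond p r)))
  | A3 : forall p, IsAx (Cond p p)
  | A4 : forall p q, IsAx (Imp (Cond p q) (Imp p q))
  | A5 : forall s t p q,
      IsAx (Cond (And (Just s (Cond p q)) (Just t p)) (Just (TApp s t) q))
  | A6 : forall s t p, IsAx (Cond (Just s p) (Just (TSum s t) p))
  | A7 : forall s t p, IsAx (Cond (Just t p) (Just (TSum s t) p))
  | A8 : forall t p, IsAx (Cond (Just t p) p)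
  | A9 : forall t p, IsAx (Cond (Just t p) (Just (TBang t) (Just t p))).

Definition IsCS (CS : Fm -> Prop) : Prop :=
  forall f, CS f -> exists c p, f = Just (TConst c) p /\ IsAx p.

Inductive Prv (CS : Fm -> Prop) : Fm -> Prop :=
  | PAx : forall p, IsAx p -> Prv CS p
  | PCS : forall p, CS p -> Prv CS p
  | PMP : forall p q, Prv CS (Imp p q) -> Prv CS p -> Prv CS q
  | PRCN : forall p q, Prv CS q -> Prv CS (Cond p q).

(* conjunction of a finite list (empty conjunction = ~bot) *)
Fixpoint conjl (l : list Fm) : Fm :=
  match l with
  | [] => Neg Bot
  | [x] => x
  | x :: l' => And x (conjl l')
  end.

Definition Deriv (CS : Fm -> Prop) (T : Fm -> Prop) (p : Fm) : Prop :=
  exists l, (forall x, In x l -> T x) /\ Prv CS (Imp (conjl l) p).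

Definition Consistent CS (T : Fm -> Prop) : Prop := ~ Deriv CS T Bot.

Definition MCS CS (T : Fm -> Prop) : Prop :=
  Consistent CS T /\
  forall p, ~ T p -> ~ Consistent CS (fun x => T x \/ x = p).

Section Models.
Variables (W : Type) (WN : W -> Prop) (RF : Fm -> W -> W -> Prop)
          (RT : Tm -> W -> W -> Prop) (V : W -> Fm -> Prop).

Definition IsRelModel : Prop :=
  (exists w, WN w) /\
  (forall p w v, RF p w v -> WN w /\ WN v) /\
  (forall w f, WN w -> V w f -> exists n, f = Atom n).

Fixpoint truth (f : Fm) (w : W) : Prop :=
  (~ WN w /\ V w f) \/
  (WN w /\
   match f with
   | Atom n => V w (Atom n)
   | Neg a => ~ truth a w
   | And a b => truth a w /\ truth b w
   | Imp a b => truth a w -> truth b w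
   | Cond a b => forall v, RF a w v -> truth b v
   | Just t a => forall v, RT t w v -> truth a v
   end).

Definition IsModel (CS : Fm -> Prop) : Prop :=
  IsRelModel /\
  forall w, WN w ->
    (forall p v, RF p w v -> truth p v) /\
    (forall p, truth p w -> RF p w w) /\
    (forall c p v, CS (Just (TConst c) p) -> RT (TConst c) w v ->
                   truth p v) /\
    (forall s t v, RT (TSum s t) w v -> RT s w v /\ RT t w v) /\
    (forall s t v, RT (TApp s t) w v ->
       forall p q, truth (And (Just s (Cond p q)) (Just t p)) w ->
                   truth q v) /\
    (forall t, RT t w w) /\
    (forall t v u, RT (TBang t) w v -> RT t v u -> RT t w u).
End Models.

Definition CW := Fm -> Prop.
Definition CWN CS (G : CW) : Prop := MCS CS G.
Definition CRF CS (p : Fm) (G D : CW) : Prop :=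
  MCS CS G /\ MCS CS D /\ forall q, G (Cond p q) -> D q.
Definition CRT (t : Tm) (G D : CW) : Prop :=
  forall q, G (Just t q) -> D q.
Definition CV CS (G : CW) (f : Fm) : Prop :=
  (MCS CS G -> G f /\ exists n, f = Atom n) /\ (~ MCS CS G -> G f).

(** A maximal consistent set satisfies exactly its members in the canonical
    model, and so does every non-normal world, by the choice of [V].  For
    [φ > ψ] the nontrivial direction is an existence lemma: if [φ > ψ ∉ Γ]
    then [Γ/φ ∪ {¬ψ}] is consistent, because (A2) and (RCN) let derivations
    from [Γ/φ] be carried out under [φ >]; Lindenbaum extends it to some [Δ]
    with [Γ R_φ Δ] and [ψ ∉ Δ].  For [t:φ] the witness is the set [Γ/t]
    itself, a world because [W] contains every set of formulas.  Once truth is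
    membership, the frame conditions (1)-(7) express the closure of maximal
    consistent sets under (A3), (A5)-(A9), [CS] and, via (A4), under [>].
    Finally [W_N] is nonempty since the empty set is consistent: all theorems
    are valid when [φ > ψ] is read as [φ ⊃ ψ] and [t:φ] as [φ]. *)

From Stdlib Require Import List Classical Cantor Lia.
Import ListNotations.

Lemma Tm_eq_dec (s t : Tm) : {s = t} + {s <> t}.
Proof. decide equality; decide equality. Qed.

Lemma Fm_eq_dec (p q : Fm) : {p = q} + {p <> q}.
Proof. decide equality; solve [decide equality | apply Tm_eq_dec]. Qed.

Section Derivations.
Variable CS : Fm -> Prop.

Lemma Prv_taut f s : tautology f -> Prv CS (psubst s f).
Proof. intro Hf; apply PAx, A1, Hf. Qed.

(* [PVar i] is instantiated by the [i]-th formula of [l]; the truth table is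
   checked on the first three variables only. *)
Ltac taut_instance f l :=
  refine (Prv_taut f (fun n => nth n l chi) _);
  let v := fresh "v" in intro v; simpl; destruct (v 0), (v 1), (v 2); reflexivity.

Lemma Prv_K a b : Prv CS (Imp a (Imp b a)).
Proof. taut_instance (PImp (PVar 0) (PImp (PVar 1) (PVar 0))) [a; b]. Qed.

Lemma Prv_S c a b : Prv CS (Imp (Imp c (Imp a b)) (Imp (Imp c a) (Imp c b))).
Proof.
  taut_instance (PImp (PImp (PVar 0) (PImp (PVar 1) (PVar 2)))
                      (PImp (PImp (PVar 0) (PVar 1)) (PImp (PVar 0) (PVar 2)))) [c; a; b].
Qed.

Lemma Prv_imp_refl a : Prv CS (Imp a a).
Proof. taut_instance (PImp (PVar 0) (PVar 0)) [a]. Qed.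

Lemma Prv_syllogism a b c : Prv CS (Imp (Imp a b) (Imp (Imp b c) (Imp a c))).
Proof.
  taut_instance (PImp (PImp (PVar 0) (PVar 1))
                      (PImp (PImp (PVar 1) (PVar 2)) (PImp (PVar 0) (PVar 2)))) [a; b; c].
Qed.

Lemma Prv_imp_pair c a b : Prv CS (Imp (Imp c a) (Imp (Imp c b) (Imp c (And a b)))).
Proof.
  taut_instance (PImp (PImp (PVar 0) (PVar 1))
                      (PImp (PImp (PVar 0) (PVar 2)) (PImp (PVar 0) (PAnd (PVar 1) (PVar 2)))))
                [c; a; b].
Qed.

Lemma Prv_and_fst a b : Prv CS (Imp (And a b) a).
Proof. taut_instance (PImp (PAnd (PVar 0) (PVar 1)) (PVar 0)) [a; b]. Qed.

Lemma Prv_and_snd a b : Prv CS (Imp (And a b) b).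
Proof. taut_instance (PImp (PAnd (PVar 0) (PVar 1)) (PVar 1)) [a; b]. Qed.

Lemma Prv_and_intro a b : Prv CS (Imp a (Imp b (And a b))).
Proof. taut_instance (PImp (PVar 0) (PImp (PVar 1) (PAnd (PVar 0) (PVar 1)))) [a; b]. Qed.

Lemma Prv_curry a b c : Prv CS (Imp (Imp (And a b) c) (Imp a (Imp b c))).
Proof.
  taut_instance (PImp (PImp (PAnd (PVar 0) (PVar 1)) (PVar 2))
                      (PImp (PVar 0) (PImp (PVar 1) (PVar 2)))) [a; b; c].
Qed.

Lemma Prv_not_Bot : Prv CS (Neg Bot).
Proof. taut_instance (PNeg (PAnd (PVar 0) (PNeg (PVar 0)))) [chi]. Qed.

Lemma Prv_neg_intro a : Prv CS (Imp (Imp a Bot) (Neg a)).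
Proof.
  taut_instance (PImp (PImp (PVar 0) (PAnd (PVar 1) (PNeg (PVar 1)))) (PNeg (PVar 0))) [a; chi].
Qed.

Lemma Prv_by_contradiction a : Prv CS (Imp (Imp (Neg a) Bot) a).
Proof.
  taut_instance (PImp (PImp (PNeg (PVar 0)) (PAnd (PVar 1) (PNeg (PVar 1)))) (PVar 0)) [a; chi].
Qed.

Lemma Prv_contradiction a : Prv CS (Imp a (Imp (Neg a) Bot)).
Proof.
  taut_instance (PImp (PVar 0) (PImp (PNeg (PVar 0)) (PAnd (PVar 1) (PNeg (PVar 1))))) [a; chi].
Qed.

Lemma Prv_explosion a b : Prv CS (Imp (Neg a) (Imp a b)).
Proof. taut_instance (PImp (PNeg (PVar 0)) (PImp (PVar 0) (PVar 1))) [a; b]. Qed.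

Lemma Prv_MP2 a b c : Prv CS (Imp a (Imp b c)) -> Prv CS a -> Prv CS b -> Prv CS c.
Proof. intros Habc Ha Hb; exact (PMP _ _ _ (PMP _ _ _ Habc Ha) Hb). Qed.

Lemma Prv_imp_trans a b c : Prv CS (Imp a b) -> Prv CS (Imp b c) -> Prv CS (Imp a c).
Proof. intros Hab Hbc; exact (Prv_MP2 _ _ _ (Prv_syllogism a b c) Hab Hbc). Qed.

Lemma Prv_conjl_elim l x : In x l -> Prv CS (Imp (conjl l) x).
Proof.
  induction l as [|y [|z l] IH]; intro Hx; [destruct Hx| |].
  - destruct Hx as [<-|[]]; apply Prv_imp_refl.
  - destruct Hx as [<-|Hx]; [apply Prv_and_fst|].
    exact (Prv_imp_trans _ _ _ (Prv_and_snd _ _) (IH Hx)).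
Qed.

Lemma Prv_conjl_intro c l :
  (forall x, In x l -> Prv CS (Imp c x)) -> Prv CS (Imp c (conjl l)).
Proof.
  induction l as [|y [|z l] IH]; intro Hl.
  - exact (PMP _ _ _ (Prv_K _ _) Prv_not_Bot).
  - apply Hl; left; reflexivity.
  - apply (Prv_MP2 _ _ _ (Prv_imp_pair _ _ _)); [apply Hl; left; reflexivity|].
    apply IH; intros x Hx; apply Hl; right; exact Hx.
Qed.

Lemma Deriv_mem (T : Fm -> Prop) x : T x -> Deriv CS T x.
Proof.
  intro Hx; exists [x]; split; [intros y [<-|[]]; exact Hx | apply Prv_imp_refl].
Qed.

Lemma Deriv_Prv (T : Fm -> Prop) p : Prv CS p -> Deriv CS T p.
Proof. intro Hp; exists []; split; [intros _ []|exact (PMP _ _ _ (Prv_K _ _) Hp)]. Qed.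

Lemma Deriv_mono (T T' : Fm -> Prop) p :
  (forall x, T x -> T' x) -> Deriv CS T p -> Deriv CS T' p.
Proof. intros HT [l [Hl Hp]]; exists l; split; auto. Qed.

Lemma Deriv_MP (T : Fm -> Prop) a b :
  Deriv CS T (Imp a b) -> Deriv CS T a -> Deriv CS T b.
Proof.
  intros [l1 [Hl1 P1]] [l2 [Hl2 P2]]; exists (l1 ++ l2); split.
  - intros x Hx; apply in_app_or in Hx as [Hx|Hx]; auto.
  - assert (E1 : Prv CS (Imp (conjl (l1 ++ l2)) (conjl l1)))
      by (apply Prv_conjl_intro; intros; apply Prv_conjl_elim, in_or_app; auto).
    assert (E2 : Prv CS (Imp (conjl (l1 ++ l2)) (conjl l2)))
      by (apply Prv_conjl_intro; intros; apply Prv_conjl_elim, in_or_app; auto).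
    exact (Prv_MP2 _ _ _ (Prv_S _ _ _) (Prv_imp_trans _ _ _ E1 P1)
                                       (Prv_imp_trans _ _ _ E2 P2)).
Qed.

Lemma Deriv_deduction (T : Fm -> Prop) p q :
  Deriv CS (fun x => T x \/ x = p) q -> Deriv CS T (Imp p q).
Proof.
  intros [l [Hl Hq]]; exists (remove Fm_eq_dec p l); split.
  - intros x Hx; apply in_remove in Hx as [Hx Hxp].
    destruct (Hl x Hx); [assumption|contradiction].
  - apply (PMP _ _ _ (Prv_curry _ _ _)), (fun H => Prv_imp_trans _ _ _ H Hq).
    apply Prv_conjl_intro; intros x Hx.
    destruct (Fm_eq_dec x p) as [->|Hxp]; [apply Prv_and_snd|].
    apply (Prv_imp_trans _ _ _ (Prv_and_fst _ _)), Prv_conjl_elim, in_in_remove; assumption.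
Qed.

Section MaximalConsistent.
Variable G : Fm -> Prop.
Hypothesis HG : MCS CS G.

Lemma mcs_Deriv p : Deriv CS G p -> G p.
Proof.
  intro Hp; apply NNPP; intro Hn.
  apply (proj2 HG p Hn); intro Hcons.
  exact (proj1 HG (Deriv_MP _ _ _ (Deriv_deduction _ _ _ Hcons) Hp)).
Qed.

Lemma mcs_Prv p : Prv CS p -> G p.
Proof. intro Hp; apply mcs_Deriv, Deriv_Prv, Hp. Qed.

Lemma mcs_MP a b : G (Imp a b) -> G a -> G b.
Proof.
  intros Hab Ha; apply mcs_Deriv; exact (Deriv_MP _ _ _ (Deriv_mem _ _ Hab) (Deriv_mem _ _ Ha)).
Qed.

Lemma mcs_Neg a : G (Neg a) <-> ~ G a.
Proof.
  split.
  - intros Hna Ha; apply (proj1 HG).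
    apply (Deriv_MP _ (Neg a)); [apply (Deriv_MP _ a)|];
      auto using Deriv_mem, Deriv_Prv, Prv_contradiction.
  - intro Ha; apply mcs_Deriv.
    assert (Hincons := proj2 HG a Ha); apply NNPP, Deriv_deduction in Hincons.
    exact (Deriv_MP _ _ _ (Deriv_Prv _ _ (Prv_neg_intro a)) Hincons).
Qed.

Lemma mcs_And a b : G (And a b) <-> G a /\ G b.
Proof.
  split.
  - intro Hab; split.
    + exact (mcs_MP _ _ (mcs_Prv _ (Prv_and_fst a b)) Hab).
    + exact (mcs_MP _ _ (mcs_Prv _ (Prv_and_snd a b)) Hab).
  - intros [Ha Hb]; exact (mcs_MP _ _ (mcs_MP _ _ (mcs_Prv _ (Prv_and_intro a b)) Ha) Hb).
Qed.

Lemma mcs_Imp a b : G (Imp a b) <-> (G a -> G b).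
Proof.
  split; [exact (mcs_MP a b)|intro Hab].
  destruct (classic (G a)) as [Ha|Ha].
  - exact (mcs_MP _ _ (mcs_Prv _ (Prv_K b a)) (Hab Ha)).
  - exact (mcs_MP _ _ (mcs_Prv _ (Prv_explosion a b)) (proj2 (mcs_Neg a) Ha)).
Qed.

Lemma mcs_Cond_MP a b : G (Cond a b) -> G a -> G b.
Proof. intro Hab; apply mcs_MP, (mcs_MP _ _ (mcs_Prv _ (PAx _ _ (A4 a b))) Hab). Qed.

Lemma mcs_axiom_Cond a b : IsAx (Cond a b) -> G a -> G b.
Proof. intro Hax; apply mcs_Cond_MP, mcs_Prv, PAx, Hax. Qed.

Lemma mcs_Cond_K a x y : G (Cond a (Imp x y)) -> G (Cond a x) -> G (Cond a y).
Proof. intro Hxy; apply mcs_MP, (mcs_MP _ _ (mcs_Prv _ (PAx _ _ (A2 a x y))) Hxy). Qed.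

Lemma mcs_Cond_conjl a l : (forall x, In x l -> G (Cond a x)) -> G (Cond a (conjl l)).
Proof.
  induction l as [|y [|z l] IH]; intro Hl.
  - apply mcs_Prv, PRCN, Prv_not_Bot.
  - apply Hl; left; reflexivity.
  - set (c := conjl (z :: l)).
    apply (mcs_Cond_K _ c); [|apply IH; intros x Hx; apply Hl; right; exact Hx].
    apply (mcs_Cond_K _ y); [apply mcs_Prv, PRCN, Prv_and_intro|apply Hl; left; reflexivity].
Qed.

Lemma mcs_Cond_Deriv a q : Deriv CS (fun x => G (Cond a x)) q -> G (Cond a q).
Proof.
  intros [l [Hl Hq]].
  exact (mcs_Cond_K _ _ _ (mcs_Prv _ (PRCN _ a _ Hq)) (mcs_Cond_conjl a l Hl)).
Qed.

End MaximalConsistent.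
End Derivations.

Definition pair_code (a b : nat) : nat := Cantor.to_nat (a, b).

Lemma pair_code_inj a b c d : pair_code a b = pair_code c d -> a = c /\ b = d.
Proof.
  unfold pair_code; intro H; apply (f_equal Cantor.of_nat) in H.
  rewrite !Cantor.cancel_of_to in H; injection H; auto.
Qed.

Fixpoint Tm_code (t : Tm) : nat :=
  match t with
  | TConst n => pair_code 0 n
  | TVar n => pair_code 1 n
  | TApp s u => pair_code 2 (pair_code (Tm_code s) (Tm_code u))
  | TSum s u => pair_code 3 (pair_code (Tm_code s) (Tm_code u))
  | TBang s => pair_code 4 (Tm_code s)
  end.

Fixpoint Fm_code (f : Fm) : nat :=
  match f with
  | Atom n => pair_code 0 n
  | Neg a => pair_code 1 (Fm_code a)
  | And a b => pair_code 2 (pair_code (Fm_code a) (Fm_code b))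
  | Imp a b => pair_code 3 (pair_code (Fm_code a) (Fm_code b))
  | Cond a b => pair_code 4 (pair_code (Fm_code a) (Fm_code b))
  | Just t a => pair_code 5 (pair_code (Tm_code t) (Fm_code a))
  end.

Ltac split_pair_codes :=
  repeat match goal with
  | H : pair_code _ _ = pair_code _ _ |- _ => apply pair_code_inj in H as [? ?]
  end.

Lemma Tm_code_inj s t : Tm_code s = Tm_code t -> s = t.
Proof.
  revert t; induction s; destruct t; simpl; intro H; split_pair_codes;
    try discriminate; f_equal; auto.
Qed.

Lemma Fm_code_inj p q : Fm_code p = Fm_code q -> p = q.
Proof.
  revert q; induction p; destruct q; simpl; intro H; split_pair_codes;
    try discriminate; f_equal; auto using Tm_code_inj.
Qed.

Section Lindenbaum.
Variables (CS : Fm -> Prop) (T : Fm -> Prop).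

(* Stage [n + 1] decides the formula with code [n]. *)
Fixpoint lindenbaum_stage (n : nat) : Fm -> Prop :=
  match n with
  | 0 => T
  | S n => fun x => lindenbaum_stage n x \/
      (Fm_code x = n /\ Consistent CS (fun y => lindenbaum_stage n y \/ y = x))
  end.

Definition lindenbaum_limit (x : Fm) : Prop := exists n, lindenbaum_stage n x.

Lemma lindenbaum_stage_mono m n x : m <= n -> lindenbaum_stage m x -> lindenbaum_stage n x.
Proof. induction 1; simpl; auto. Qed.

Lemma lindenbaum_stage_consistent n : Consistent CS T -> Consistent CS (lindenbaum_stage n).
Proof.
  intro HT; induction n as [|n IH]; [exact HT|]; simpl.
  destruct (classic (exists x, Fm_code x = n /\
              Consistent CS (fun y => lindenbaum_stage n y \/ y = x))) as [[x [Hx Hcons]]|Hno].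
  - intro Hbot; apply Hcons; revert Hbot; apply Deriv_mono.
    intros y [Hy|[Hy _]]; [now left|right; apply Fm_code_inj; congruence].
  - intro Hbot; apply IH; revert Hbot; apply Deriv_mono.
    intros y [Hy|Hy]; [exact Hy|exfalso; apply Hno; eauto].
Qed.

Lemma lindenbaum_stage_bound l :
  (forall x, In x l -> lindenbaum_limit x) ->
  exists N, forall x, In x l -> lindenbaum_stage N x.
Proof.
  induction l as [|a l IH]; intro Hl; [exists 0; intros _ []|].
  destruct IH as [N HN]; [intros x Hx; apply Hl; right; exact Hx|].
  destruct (Hl a (or_introl eq_refl)) as [m Hm].
  exists (N + m); intros x [<-|Hx].
  - exact (lindenbaum_stage_mono m (N + m) _ ltac:(lia) Hm).
  - exact (lindenbaum_stage_mono N (N + m) _ ltac:(lia) (HN x Hx)).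
Qed.

Lemma lindenbaum : Consistent CS T -> exists D, MCS CS D /\ forall x, T x -> D x.
Proof.
  intro HT; exists lindenbaum_limit; split; [split|intros x Hx; exists 0; exact Hx].
  - intros [l [Hl Hbot]]; destruct (lindenbaum_stage_bound l Hl) as [N HN].
    exact (lindenbaum_stage_consistent N HT (ex_intro _ l (conj HN Hbot))).
  - intros p Hp Hcons; apply Hp; exists (S (Fm_code p)); right; split; [reflexivity|].
    intro Hbot; apply Hcons; revert Hbot; apply Deriv_mono.
    intros y [Hy|Hy]; [left; eexists; exact Hy|now right].
Qed.

End Lindenbaum.

Fixpoint collapse_eval (v : nat -> bool) (f : Fm) : bool :=
  match f with
  | Atom n => v n
  | Neg a => negb (collapse_eval v a)
  | And a b => andb (collapse_eval v a) (collapse_eval v b)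
  | Imp a b | Cond a b => orb (negb (collapse_eval v a)) (collapse_eval v b)
  | Just _ a => collapse_eval v a
  end.

Lemma collapse_eval_psubst v s f :
  collapse_eval v (psubst s f) = peval (fun n => collapse_eval v (s n)) f.
Proof. induction f; simpl; congruence. Qed.

Lemma collapse_eval_IsAx v p : IsAx p -> collapse_eval v p = true.
Proof.
  destruct 1; simpl; try rewrite collapse_eval_psubst; auto;
    repeat match goal with |- context [collapse_eval v ?x] => destruct (collapse_eval v x) end;
    reflexivity.
Qed.

Lemma collapse_eval_Prv CS v p : IsCS CS -> Prv CS p -> collapse_eval v p = true.
Proof.
  intro HCS; induction 1 as [p Hp|p Hp|p q _ IHpq _ IHp|p q _ IHq].
  - exact (collapse_eval_IsAx v p Hp).
  - destruct (HCS p Hp) as [c [q [-> Hq]]]; exact (collapse_eval_IsAx v q Hq).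
  - simpl in IHpq; rewrite IHp in IHpq; exact IHpq.
  - simpl; rewrite IHq; apply Bool.orb_true_r.
Qed.

Lemma Consistent_empty CS : IsCS CS -> Consistent CS (fun _ => False).
Proof.
  intros HCS [[|x l] [Hl Hbot]]; [|exact (Hl x (or_introl eq_refl))].
  discriminate (collapse_eval_Prv CS (fun _ => true) _ HCS Hbot).
Qed.

Section CanonicalModel.
Variable CS : Fm -> Prop.

Local Notation ctruth := (truth CW (CWN CS) (CRF CS) CRT (CV CS)).

Lemma canonical_truth_nonnormal f G : ~ MCS CS G -> (ctruth f G <-> G f).
Proof.
  intro HG; unfold CV; destruct f; simpl; split;
    solve [intros [[_ [_ H]]|[H _]]; [exact (H HG)|contradiction]
          | intro H; left; split; [exact HG|split; [contradiction|intros _; exact H]]].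
Qed.

Lemma normal_world_iff (N Q P : Prop) : N -> ((~ N /\ Q) \/ (N /\ P) <-> P).
Proof. tauto. Qed.

Lemma canonical_Cond_witness G a b :
  MCS CS G -> ~ G (Cond a b) -> exists D, CRF CS a G D /\ ~ D b.
Proof.
  intros HG Hab.
  assert (Hcons : Consistent CS (fun x => G (Cond a x) \/ x = Neg b)).
  { intro Hbot; apply Hab, (mcs_Cond_Deriv CS G HG).
    exact (Deriv_MP CS _ _ _ (Deriv_Prv CS _ _ (Prv_by_contradiction CS b))
                             (Deriv_deduction CS _ _ _ Hbot)). }
  destruct (lindenbaum CS _ Hcons) as [D [HD HsubD]].
  exists D; split; [split; [exact HG|split; [exact HD|auto]]|].
  apply (mcs_Neg CS D HD), HsubD; right; reflexivity.
Qed.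

Lemma canonical_truth f G : ctruth f G <-> G f.
Proof.
  revert G; induction f as [n|a IH|a IHa b IHb|a IHa b IHb|a IHa b IHb|t a IH]; intro G;
    (destruct (classic (MCS CS G)) as [HG|HG]; [|exact (canonical_truth_nonnormal _ G HG)]);
    simpl; unfold CWN; rewrite (normal_world_iff _ _ _ HG).
  - unfold CV; split; [intros [H _]; exact (proj1 (H HG))|].
    intro H; split; [intros _; eauto|contradiction].
  - rewrite (mcs_Neg CS G HG), IH; reflexivity.
  - rewrite (mcs_And CS G HG), IHa, IHb; reflexivity.
  - rewrite (mcs_Imp CS G HG), IHa, IHb; reflexivity.
  - split.
    + intro Hall; apply NNPP; intro Hab.
      destruct (canonical_Cond_witness G a b HG Hab) as [D [HGD HDb]].
      exact (HDb (proj1 (IHb D) (Hall D HGD))).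
    + intros Hab D [_ [_ HGD]]; apply IHb, HGD, Hab.
  - split.
    + intro Hall; apply (IH (fun q => G (Just t q))), Hall; intros q Hq; exact Hq.
    + intros Hta D HGD; apply IH, HGD, Hta.
Qed.

End CanonicalModel.

Theorem mainTheorem9 (CS : Fm -> Prop) (HCS : IsCS CS) :
  IsModel CW (CWN CS) (CRF CS) CRT (CV CS) CS.
Proof.
  destruct (lindenbaum CS _ (Consistent_empty CS HCS)) as [G0 [HG0 _]].
  split; [split; [|split]|].
  - exists G0; exact HG0.
  - intros p G D [HG [HD _]]; split; assumption.
  - intros G f HG [Hf _]; exact (proj2 (Hf HG)).
  - intros G HG; unfold CWN in HG.
    refine (conj _ (conj _ (conj _ (conj _ (conj _ (conj _ _)))))).
    + intros p D [_ [_ HGD]]; apply canonical_truth, HGD, (mcs_Prv CS G HG), PAx, A3.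
    + intros p Hp; split; [exact HG|split; [exact HG|]].
      intros q Hpq; apply (mcs_Cond_MP CS G HG _ _ Hpq), (canonical_truth CS), Hp.
    + intros c p D Hc HGD; apply canonical_truth, HGD, (mcs_Prv CS G HG), PCS, Hc.
    + intros s t D Hst; split; intros q Hq; apply Hst.
      * exact (mcs_axiom_Cond CS G HG _ _ (A6 s t q) Hq).
      * exact (mcs_axiom_Cond CS G HG _ _ (A7 s t q) Hq).
    + intros s t D Hst p q Hpq; apply canonical_truth in Hpq; apply canonical_truth, Hst.
      exact (mcs_axiom_Cond CS G HG _ _ (A5 s t p q) Hpq).
    + intros t q Hq; exact (mcs_axiom_Cond CS G HG _ _ (A8 t q) Hq).
    + intros t D E HGD HDE q Hq; apply HDE, HGD.
      exact (mcs_axiom_Cond CS G HG _ _ (A9 t q) Hq).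
Qed.
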